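(* Let $\mathcal{A}$ be a finite alphabet with $\#\mathcal{A}\ge4$. Every labeled Rauzy class of irreducible pairs on $\mathcal{A}$ contains a good pair or a degenerate$^*$ pair.
   Context: Let $n=\#\mathcal{A}$. A pair is $\mathbf{p}=(p_0,p_1)$ with $p_0,p_1:\mathcal{A}\to\{1,\dots,n\}$ bijections. Irreducible: $p_0^{-1}\{1,\dots,k\}\ne p_1^{-1}\{1,\dots,k\}$ for $1\le k<n$ (the analogous definition applies on any alphabet). Rauzy move of type $\varepsilon$: $\varepsilon\mathbf{p}=(p'_0,p'_1)$, $p'_\varepsilon=p_\varepsilon$, and for $z=p_\varepsilon^{-1}(n)$, $p'_{1-\varepsilon}(b)=p_{1-\varepsilon}(b)$ if $p_{1-\varepsilon}(b)\le p_{1-\varepsilon}(z)$, $=p_{1-\varepsilon}(b)+1$ if $p_{1-\varepsilon}(z)<p_{1-\varepsilon}(b)<n$, $=p_{1-\varepsilon}(z)+1$ if $p_{1-\varepsilon}(b)=n$. The labeled Rauzy class of an irreducible $\mathbf{p}$ is the set of pairs reachable from $\mathbf{p}$ by Rauzy moves. $\mathbf{p}$ is standard if $p_0^{-1}(1)=p_1^{-1}(n)$ and $p_1^{-1}(1)=p_0^{-1}(n)$. For $\mathcal{A}'\subset\mathcal{A}$, the restriction of $\mathbf{p}$ to $\mathcal{A}'$ is the pair $(p'_0,p'_1)$ on $\mathcal{A}'$ with $p'_\varepsilon(b)=\#\{c\in\mathcal{A}':p_\varepsilon(c)\le p_\varepsilon(b)\}$. A standard pair $\mathbf{p}$ is degenerate$^*$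 if some $c\in\mathcal{A}$ has $p_0(c)=p_1(c)=n-1$. A standard pair $\mathbf{p}$ is good if its restriction to $\mathcal{A}\setminus\{p_0^{-1}(1),p_1^{-1}(1)\}$ (i.e. to positions $2,\dots,n-1$) is irreducible. *)

From Stdlib Require Import Relations.
From mathcomp Require Import all_boot.
Set Implicit Arguments. Unset Strict Implicit. Unset Printing Implicit Defensive.

(* A pair p = (p_0, p_1) is encoded as p : bool -> A -> nat,
   with p false = p_0 and p true = p_1 (so epsilon = 0 is false, 1 - epsilon is ~~ epsilon). *)
Definition pairT (A : finType) := bool -> A -> nat.

Definition is_pair (A : finType) (p : pairT A) : Prop :=
  forall e : bool,
    injective (p e) /\ (forall a, 1 <= p e a <= #|A|) /\
    (forall k, 1 <= k <= #|A| -> exists a, p e a = k).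

Definition irreducible_on (A : finType) (S : {set A}) (q : pairT A) : Prop :=
  forall k, 1 <= k < #|S| ->
    [set a in S | q false a <= k] != [set a in S | q true a <= k].

Definition irreducible (A : finType) (p : pairT A) : Prop :=
  irreducible_on [set: A] p.

(* Restriction of p to the sub-alphabet S:
   p'_e(b) = #{c in S : p_e(c) <= p_e(b)} (only meaningful for b in S). *)
Definition restr (A : finType) (S : {set A}) (p : pairT A) : pairT A :=
  fun e b => #|[set c in S | p e c <= p e b]|.

Definition rauzy_move (A : finType) (e : bool) (p q : pairT A) : Prop :=
  exists z : A, p e z = #|A| /\
    (forall b, q e b = p e b) /\
    (forall b, q (~~ e) b =
       if p (~~ e) b <= p (~~ e) z then p (~~ e) b
       else if p (~~ e) b < #|A| then (p (~~ e) b).+1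
       else (p (~~ e) z).+1).

Definition rauzy_step (A : finType) (p q : pairT A) : Prop :=
  exists e : bool, rauzy_move e p q.

Definition in_rauzy_class (A : finType) (p q : pairT A) : Prop :=
  @clos_refl_trans (pairT A) (@rauzy_step A) p q.

Definition standard (A : finType) (p : pairT A) : Prop :=
  (exists a, p false a = 1 /\ p true a = #|A|) /\
  (exists b, p true b = 1 /\ p false b = #|A|).

Definition degenerate_star (A : finType) (p : pairT A) : Prop :=
  standard p /\ exists c, p false c = #|A|.-1 /\ p true c = #|A|.-1.

Definition inner_letters (A : finType) (p : pairT A) : {set A} :=
  [set a | (p false a != 1) && (p true a != 1)].

Definition good (A : finType) (p : pairT A) : Prop :=
  standard p /\ irreducible_on (inner_letters p) (restr (inner_letters p) p).

From Stdlib Require Import Relations FunctionalExtensionality Classical.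
From mathcomp Require Import all_boot zify.
Set Implicit Arguments. Unset Strict Implicit. Unset Printing Implicit Defensive.

(* Consecutive Rauzy moves of one type fix that row and cyclically rotate the
   tail of the other row lying after the position of the letter that ends the
   first row; all such rotations therefore stay in the Rauzy class.

   Minimising, over the class, the bottom position of the letter ending the top
   row, rotations show that a minimum k > 1 would make the first k - 1 letters
   of both rows coincide, contradicting irreducibility; so some pair of the
   class has a letter last on top and first at the bottom, and one more
   rotation makes it standard.

   If a standard pair is neither good nor degenerate*, let K be the largest
   position splitting its inner letters into the same two sets in both rows.
   Four rotations exchange two blocks of positions in each row, producing a
   standard pair whose inner letters admit no such split: a split would either
   be witnessed false by an explicit letter or come from a split of the
   original pair beyond K. *)

Section RauzyClasses.
Variable A : finType.
Local Notation n := #|A|.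
Implicit Types (p q : pairT A) (e : bool).

(* [lia] must see [#|A|] as a single atom, but it also occurs as [card.body]. *)
Ltac normn := repeat match goal with
 | H : context [@card.body _ ?m] |- _ => progress (change (@card.body _ m) with n in H)
 | |- context [@card.body _ ?m] => progress (change (@card.body _ m) with n)
 end.
Ltac nlia := normn; lia.

Ltac splitif := repeat match goal with
  |- context [if ?b then _ else _] =>
     lazymatch b with context [if _ then _ else _] => fail | _ =>
       case: (boolP b) => ?; rewrite /= end
  end.

Lemma pair_bound p e a : is_pair p -> 1 <= p e a <= n.
Proof. by move=> /(_ e) [_ [bnd _]]. Qed.

Lemma pair_onto p e k : is_pair p -> 1 <= k <= n -> exists a, p e a = k.
Proof. by move=> /(_ e) [_ [_ onto]]; apply: onto. Qed.

Lemma pair_eq p e a b : is_pair p -> (p e a == p e b) = (a == b).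
Proof. by move=> /(_ e) [inj _]; apply: inj_eq. Qed.

Lemma card_pair_le p e k : is_pair p -> k <= n -> #|[set c | p e c <= k]| = k.
Proof.
move=> Hp; elim: k => [|k IHk] hk.
  apply/eqP; rewrite cards_eq0; apply/eqP/setP => c; rewrite !inE.
  by have := pair_bound e c Hp; nlia.
have [a Ha] := pair_onto e Hp (k := k.+1) ltac:(nlia).
have -> : [set c | p e c <= k.+1] = a |: [set c | p e c <= k].
  by apply/setP => c; rewrite !inE leq_eqVlt ltnS -Ha pair_eq.
by rewrite cardsU1 IHk ?inE ?Ha ?ltnn //; nlia.
Qed.

Definition shift_after j v := if v <= j then v else if v < n then v.+1 else j.+1.

Lemma shift_after_inj j v w :
  shift_after j v = shift_after j w -> v <= n -> w <= n -> v = w.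
Proof. by rewrite /shift_after; splitif; nlia. Qed.

Lemma rauzy_move_pair e p q : rauzy_move e p q -> is_pair p -> is_pair q.
Proof.
case=> z [_ [Hsame Hother]] Hp e'.
have [-> | ne] := eqVneq e' e.
  have [inj [bnd onto]] := Hp e.
  split; first by move=> a b; rewrite !Hsame => /inj.
  by split=> [a | k /onto [a <-]]; [rewrite Hsame | exists a].
have -> : e' = ~~ e by destruct e, e'.
have [inj [bnd onto]] := Hp (~~ e); have hz := bnd z.
have Hshift b : q (~~ e) b = shift_after (p (~~ e) z) (p (~~ e) b) := Hother b.
split; [|split].
- move=> a b; rewrite !Hshift => /shift_after_inj h; apply: inj.
  by apply: h; [case/andP: (bnd a) | case/andP: (bnd b)].
- by move=> a; rewrite Hshift /shift_after; have := bnd a; splitif; nlia.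
- move=> k hk; case: (leqP k (p (~~ e) z)) => hkz.
    have [c Hc] := onto k hk; exists c; rewrite Hshift Hc /shift_after; splitif; nlia.
  have [-> | hk1] := eqVneq k (p (~~ e) z).+1.
    have [c Hc] := onto n ltac:(nlia); exists c.
    by rewrite Hshift Hc /shift_after; splitif; nlia.
  have [c Hc] := onto k.-1 ltac:(nlia); exists c.
  by rewrite Hshift Hc /shift_after; splitif; nlia.
Qed.

Lemma rauzy_move_irreducible e p q :
  rauzy_move e p q -> is_pair p -> irreducible p -> irreducible q.
Proof.
case=> z [Hz [Hsame Hother]] Hp Hi k; rewrite cardsT => hk.
have Hshift b : q (~~ e) b = shift_after (p (~~ e) z) (p (~~ e) b) := Hother b.
have [hkz | hzk] := leqP k (p (~~ e) z).
  have low e' c : (q e' c <= k) = (p e' c <= k).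
    have [-> | ne] := eqVneq e' e; first by rewrite Hsame.
    have -> : e' = ~~ e by destruct e, e'.
    by rewrite Hshift /shift_after; have := pair_bound (~~ e) c Hp; splitif; nlia.
  have := Hi k; rewrite cardsT => /(_ hk) /negP nsplit.
  apply/negP => /eqP/setP Ek; apply: nsplit; apply/eqP/setP => c.
  by have := Ek c; rewrite !inE !low.
(* [z] is last in row [e] but not beyond [k] in the other row. *)
apply/negP => /eqP/setP/(_ z); rewrite !inE.
have qz : q e z = n by rewrite Hsame.
have qz' : q (~~ e) z = p (~~ e) z by rewrite Hshift /shift_after leqnn.
by destruct e; rewrite /= in qz qz' hzk; rewrite qz qz'; nlia.
Qed.

Lemma rauzy_class_pair p q : in_rauzy_class p q -> is_pair p -> is_pair q.
Proof.
elim=> [x y [e Hm] | // | x y w _ IH1 _ IH2]; first exact: rauzy_move_pair Hm.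
by move=> /IH1.
Qed.

Lemma rauzy_class_irreducible p q :
  in_rauzy_class p q -> is_pair p -> irreducible p -> irreducible q.
Proof.
elim=> [x y [e Hm] | // | x y w Hxy IH1 _ IH2] Hx Hix.
  exact: rauzy_move_irreducible Hm Hx Hix.
exact: IH2 (rauzy_class_pair Hxy Hx) (IH1 Hx Hix).
Qed.

(* [rot j r] cyclically shifts the positions [j+1 .. n] up by [r]: this is what
   [r] consecutive moves of type [e] do to row [~~ e], [j] being the position in
   row [~~ e] of the last letter of row [e]. *)
Definition rot j r v := if v <= j then v else if v + r <= n then v + r else v + r - (n - j).

Definition rotate e j r p : pairT A :=
  fun e' b => if e' == e then p e' b else rot j r (p e' b).

Lemma rotate_same e j r p b : rotate e j r p e b = p e b.
Proof. by rewrite /rotate eqxx. Qed.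

Lemma rotate_other e j r p b : rotate e j r p (~~ e) b = rot j r (p (~~ e) b).
Proof. by rewrite /rotate; case: e. Qed.

Lemma rot_low j r v : v <= j -> rot j r v = v.
Proof. by rewrite /rot => ->. Qed.

Lemma rot_last j v : j < v <= n -> rot j (n - v) v = n.
Proof. by rewrite /rot; splitif; nlia. Qed.

Lemma rotate0 e j p : is_pair p -> rotate e j 0 p = p.
Proof.
move=> Hp; apply: functional_extensionality => e'.
apply: functional_extensionality => b; rewrite /rotate /rot addn0.
by have /andP [_ ->] := pair_bound e' b Hp; case: ifP => //; case: ifP.
Qed.

Lemma rotate_move e j r p z : is_pair p -> p e z = n -> p (~~ e) z = j -> r < n - j ->
  rauzy_move e (rotate e j r p) (rotate e j r.+1 p).
Proof.
move=> Hp Hz Hj hr; exists z; split; first by rewrite rotate_same.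
split=> b; first by rewrite !rotate_same.
rewrite !rotate_other Hj; have := pair_bound (~~ e) b Hp.
by rewrite /rot; splitif; nlia.
Qed.

Lemma rauzy_class_rotate e j r p z : is_pair p -> p e z = n -> p (~~ e) z = j ->
  r <= n - j -> in_rauzy_class p (rotate e j r p).
Proof.
move=> Hp Hz Hj; elim: r => [|r IHr] hr; first by rewrite rotate0 //; exact: rt_refl.
apply: (rt_trans _ _ _ _ _ (IHr (ltnW hr))); apply: rt_step; exists e.
exact: rotate_move Hp Hz Hj hr.
Qed.

Section Descent.
Variables (p : pairT A) (k : nat).
Hypothesis Hp : is_pair p.
Hypothesis Hi : irreducible p.
Hypothesis k_min : forall q d, in_rauzy_class p q -> q false d = n -> k <= q true d.

Lemma min_le_bottom_above_last q c d : in_rauzy_class p q ->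
  q true c = n -> q false c < q false d -> k <= q true d.
Proof.
move=> Hpq Hc Hcd; have Hq := rauzy_class_pair Hpq Hp.
have hd := pair_bound false d Hq.
pose q' := rotate true (q false c) (n - q false d) q.
have Hqq' : in_rauzy_class q q' by apply: (rauzy_class_rotate (z := c)) => //; nlia.
have hlast : q false c < q false d <= n by nlia.
have := k_min (d := d) (rt_trans _ _ _ _ _ Hpq Hqq').
by rewrite /q' /rotate /= rot_last //; apply.
Qed.

Lemma min_le_top q al c : in_rauzy_class p q ->
  q false al = n -> q true al = k -> k <= q true c -> k <= q false c.
Proof.
move=> Hpq Hal Hal' hc; have Hq := rauzy_class_pair Hpq Hp.
have := pair_bound true al Hq; have := pair_bound false c Hq; rewrite Hal' => hcb hk.
have [-> | ne] := eqVneq c al; first by rewrite Hal; nlia.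
have hne : q true c != k by rewrite -Hal' pair_eq.
have {hne}hc : k < q true c by nlia.
(* Making [c] last in the bottom row moves the top row nowhere. *)
pose q' := rotate false k (n - q true c) q.
have Hpq' : in_rauzy_class p q'.
  apply: (rt_trans _ _ _ _ _ Hpq); apply: (rauzy_class_rotate (z := al)) => //; nlia.
have q'c : q' true c = n.
  by rewrite /q' /rotate /= rot_last //; have := pair_bound true c Hq; nlia.
have low : [set c' | q true c' <= k.-1] \subset [set c' | q false c' <= (q false c).-1].
  apply/subsetP => c'; rewrite !inE => hc'k.
  have : q false c' != q false c.
    by rewrite pair_eq //; apply/negP => /eqP Ec; move: hc'k; rewrite Ec; nlia.
  case: (leqP (q false c') (q false c).-1) => // hlt hneq.
  have := min_le_bottom_above_last (d := c') Hpq' q'c.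
  have hlow : q true c' <= k by nlia.
  rewrite /q' /rotate /= rot_low //.
  by move/(_ ltac:(nlia)); nlia.
by have := subset_leq_card low; rewrite !card_pair_le //; nlia.
Qed.

Lemma min_last_bottom q al : in_rauzy_class p q ->
  q false al = n -> q true al = k -> k = 1.
Proof.
move=> Hpq Hal Hal'; have Hq := rauzy_class_pair Hpq Hp.
have Hqi := rauzy_class_irreducible Hpq Hp Hi.
have := pair_bound true al Hq; rewrite Hal' => hk.
case: (ltnP 1 k) => [hk1 | ]; last by nlia.
have sub : [set c | q false c <= k.-1] \subset [set c | q true c <= k.-1].
  apply/subsetP => c; rewrite !inE; apply: contraTT; rewrite -!ltnNge => hc.
  have : k <= q false c by apply: (min_le_top Hpq Hal Hal'); nlia.
  by nlia.
have Heq : [set c | q false c <= k.-1] = [set c | q true c <= k.-1].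
  by apply/eqP; rewrite eqEcard sub !card_pair_le //; nlia.
have := Hqi k.-1; rewrite cardsT => /(_ ltac:(nlia)) /negP; case.
by apply/eqP/setP => c; have := Heq; move/setP/(_ c); rewrite !inE.
Qed.

End Descent.

Lemma rauzy_class_last_first p : 0 < n -> is_pair p -> irreducible p ->
  exists q a, [/\ in_rauzy_class p q, q false a = n & q true a = 1].
Proof.
move=> hn Hp Hi.
pose G := exists q a, [/\ in_rauzy_class p q, q false a = n & q true a = 1].
case: (classic G) => // nG; exfalso.
have [a0 Ha0] := pair_onto false Hp (k := n) ltac:(nlia).
suff Hk k q a : in_rauzy_class p q -> q false a = n -> q true a = k -> False.
  exact: Hk _ _ _ (rt_refl _ _ _) Ha0 erefl.
elim/ltn_ind: k q a => k IHk q al Hpq Hal Hal'.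
apply: nG; exists q, al; split=> //; rewrite Hal'.
apply: (min_last_bottom Hp Hi _ Hpq Hal Hal') => q' d Hpq' Hd.
by case: (leqP k (q' true d)) => // /IHk; move/(_ q' d Hpq' Hd).
Qed.

Lemma rauzy_class_standard p : 1 < n -> is_pair p -> irreducible p ->
  exists q, in_rauzy_class p q /\ standard q.
Proof.
move=> hn Hp Hi.
have [q [al [Hpq Hal Hal']]] := rauzy_class_last_first (ltnW hn) Hp Hi.
have Hq := rauzy_class_pair Hpq Hp.
have [a Ha] := pair_onto false Hq (k := 1) ltac:(nlia).
have hat : 1 < q true a.
  have : q true a != q true al by rewrite !pair_eq // -(pair_eq false a al Hq) Ha Hal; nlia.
  by rewrite Hal'; have := pair_bound true a Hq; nlia.
(* Bring [a], first in the top row, to the end of the bottom row. *)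
exists (rotate false 1 (n - q true a) q); split.
  apply: (rt_trans _ _ _ _ _ Hpq); apply: (rauzy_class_rotate (z := al)) => //.
  by have := pair_bound true a Hq; nlia.
split; [exists a | exists al]; rewrite /rotate /=.
  by rewrite Ha rot_last //; have := pair_bound true a Hq; nlia.
by rewrite Hal Hal' rot_low.
Qed.

Lemma inner_lettersE q e c : is_pair q -> standard q ->
  (c \in inner_letters q) = (1 < q e c < n).
Proof.
move=> Hq [[a [Ha1 Ha2]] [b [Hb1 Hb2]]]; rewrite inE.
have hb : (q true c == 1) = (q false c == n) by rewrite -Hb1 -Hb2 !pair_eq.
have ha : (q false c == 1) = (q true c == n) by rewrite -Ha1 -Ha2 !pair_eq.
have := pair_bound false c Hq; have := pair_bound true c Hq.
by case: e; [rewrite ha | rewrite hb]; nlia.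
Qed.

Lemma card_inner_le q e v : is_pair q -> standard q -> 0 < v < n ->
  #|[set c in inner_letters q | q e c <= v]| = v.-1.
Proof.
move=> Hq Hs hv; have [w Hw] := pair_onto e Hq (k := 1) ltac:(nlia).
have -> : [set c in inner_letters q | q e c <= v] = [set c | q e c <= v] :\ w.
  apply/setP => c; have := inner_lettersE e c Hq Hs; rewrite !inE => ->.
  by rewrite -(pair_eq e c w Hq) Hw; have := pair_bound e c Hq; nlia.
by have := cardsD1 w [set c | q e c <= v]; rewrite card_pair_le ?inE ?Hw //; nlia.
Qed.

Lemma restr_inner q e c : is_pair q -> standard q -> c \in inner_letters q ->
  restr (inner_letters q) q e c = (q e c).-1.
Proof.
move=> Hq Hs hc; rewrite /restr card_inner_le //.
by move: hc; rewrite (inner_lettersE e c Hq Hs); nlia.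
Qed.

Lemma card_inner_letters q : 1 < n -> is_pair q -> standard q ->
  #|inner_letters q| = n.-2.
Proof.
move=> hn Hq Hs.
rewrite (@eq_card _ (inner_letters q) [set c in inner_letters q | q false c <= n.-1]).
  by rewrite card_inner_le //; nlia.
move=> c; rewrite [in RHS]inE; case: (boolP (c \in inner_letters q)) => //= hc.
by move: hc; rewrite (inner_lettersE false c Hq Hs); nlia.
Qed.

(* Position [K] of [q] separates the inner letters; this is the cut [K - 1] of
   their restriction. *)
Definition inner_cut q K : bool :=
  [forall c in inner_letters q, (q false c <= K) == (q true c <= K)].

Lemma inner_cutP q K : reflect
  (forall c, c \in inner_letters q -> (q false c <= K) = (q true c <= K)) (inner_cut q K).
Proof. by apply: (iffP forall_inP) => H c /H; [move/eqP | move->]. Qed.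

Lemma good_of_no_inner_cut q : 1 < n -> is_pair q -> standard q ->
  (forall K, 1 < K < n.-1 -> ~~ inner_cut q K) -> good q.
Proof.
move=> hn Hq Hs H; split=> // k; rewrite card_inner_letters // => hk.
have /negP cut := H k.+1 ltac:(nlia).
apply/negP => /eqP/setP Ek; apply: cut; apply/inner_cutP => c hc.
have hc' := hc; rewrite inE in hc'.
have := Ek c; rewrite !inE hc' /= !restr_inner //.
have := inner_lettersE false c Hq Hs; have := inner_lettersE true c Hq Hs.
by rewrite hc; nlia.
Qed.

Lemma inner_cut_bottom q x : is_pair q -> standard q -> 1 < q false x < n ->
  inner_cut q (q false x) -> 1 < q true x <= q false x.
Proof.
move=> Hq Hs hx /inner_cutP cut.
have xI : x \in inner_letters q by rewrite (inner_lettersE false).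
by have := cut x xI; have := inner_lettersE true x Hq Hs; rewrite xI; nlia.
Qed.

(* [swap_blocks j k] exchanges the blocks of positions [2 .. j] and [j+1 .. k]. *)
Definition swap_blocks j k v :=
  if v <= 1 then v else if v <= j then v + k - j else if v <= k then v - j + 1 else v.

Lemma rot_rot_swap_blocks j k v : 1 < j < k -> k <= n -> 1 <= v <= n ->
  rot (k - j + 1) (j - 1) (rot 1 (n - j) v) = swap_blocks j k v.
Proof. by move=> *; rewrite /rot /swap_blocks; splitif; nlia. Qed.

Lemma rot_rot_swap_blocks_last j v : 1 < j < n.-1 -> 1 <= v <= n ->
  rot 1 (n - j - 1) (rot j 1 v) = swap_blocks j n.-1 v.
Proof. by move=> *; rewrite /rot /swap_blocks; splitif; nlia. Qed.

Lemma rauzy_class_swap_blocks q a b x d : is_pair q ->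
  q false a = 1 -> q true a = n -> q false b = n -> q true b = 1 ->
  1 < q true x < n.-1 -> 1 < q false x < q false d -> q false d < n.-1 ->
  q true d = n.-1 ->
  exists q', [/\ in_rauzy_class q q',
    forall c, q' false c = swap_blocks (q false x) (q false d) (q false c) &
    forall c, q' true c = swap_blocks (q true x) n.-1 (q true c)].
Proof.
move=> Hq Ha1 Ha2 Hb1 Hb2; set j := q true x; set K := q false x; set u := q false d.
move=> hj hK hu Hd.
(* Make [x] last on top, then [d] last at the bottom; two more rotations turn
   each row's pair of rotations into a block exchange. *)
pose q1 := rotate true 1 (n - K) q.
have R1 : in_rauzy_class q q1 by apply: (rauzy_class_rotate (z := a)) => //; nlia.
have H1 := rauzy_class_pair R1 Hq.
have q1x : q1 false x = n by rewrite /q1 /rotate /= rot_last //; nlia.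
pose q2 := rotate false j 1 q1.
have R2 : in_rauzy_class q1 q2 by apply: (rauzy_class_rotate H1 q1x) => //; nlia.
have H2 := rauzy_class_pair R2 H1.
have q2d : q2 true d = n by rewrite /q2 /q1 /rotate /= Hd /rot; splitif; nlia.
have q2d' : q2 false d = u - K + 1 by rewrite /q2 /q1 /rotate /= /rot; splitif; nlia.
pose q3 := rotate true (u - K + 1) (K - 1) q2.
have R3 : in_rauzy_class q2 q3 by apply: (rauzy_class_rotate H2 q2d q2d'); nlia.
have H3 := rauzy_class_pair R3 H2.
have q3b : q3 false b = n by rewrite /q3 /q2 /q1 /rotate /= Hb1 /rot; splitif; nlia.
have q3b' : q3 true b = 1 by rewrite /q3 /q2 /q1 /rotate /= Hb2 /rot; splitif; nlia.
pose q4 := rotate false 1 (n - j - 1) q3.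
have R4 : in_rauzy_class q3 q4 by apply: (rauzy_class_rotate H3 q3b q3b'); nlia.
exists q4; split.
- exact: rt_trans _ _ _ _ _ (rt_trans _ _ _ _ _ (rt_trans _ _ _ _ _ R1 R2) R3) R4.
- move=> c; have := pair_bound false c Hq.
  by rewrite /q4 /q3 /q2 /q1 /rotate /= => hc; rewrite rot_rot_swap_blocks //; nlia.
- move=> c; have := pair_bound true c Hq.
  by rewrite /q4 /q3 /q2 /q1 /rotate /= => hc; rewrite rot_rot_swap_blocks_last.
Qed.

Section SwappedPair.
Variables (q q' : pairT A) (x d : A).
Local Notation K := (q false x).
Local Notation j := (q true x).
Local Notation u := (q false d).
Hypothesis Hq : is_pair q.
Hypothesis Hs : standard q.
Hypothesis hK : 1 < K < u.
Hypothesis hu : u < n.-1.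
Hypothesis Hd : q true d = n.-1.
Hypothesis cutK : inner_cut q K.
Hypothesis maxK : forall J, K < J < n.-1 -> ~~ inner_cut q J.
Hypothesis Hq' : is_pair q'.
Hypothesis Hq'0 : forall c, q' false c = swap_blocks K u (q false c).
Hypothesis Hq'1 : forall c, q' true c = swap_blocks j n.-1 (q true c).

Lemma inner_x : x \in inner_letters q.
Proof. by rewrite (inner_lettersE false) //; nlia. Qed.

Lemma inner_d : d \in inner_letters q.
Proof. by rewrite (inner_lettersE true) // Hd; nlia. Qed.

Lemma bottom_x : 1 < j <= K.
Proof. by apply: inner_cut_bottom => //; nlia. Qed.

Lemma swap_standard : standard q'.
Proof.
case: Hs => [[a [Ha1 Ha2]] [b [Hb1 Hb2]]]; have := bottom_x.
by split; [exists a | exists b]; rewrite Hq'0 Hq'1 ?Ha1 ?Ha2 ?Hb1 ?Hb2 /swap_blocks;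
  splitif; nlia.
Qed.

Lemma inner_swap c : c \in inner_letters q -> c \in inner_letters q'.
Proof.
rewrite (inner_lettersE false c Hq Hs) (inner_lettersE false c Hq' swap_standard) Hq'0.
by rewrite /swap_blocks; splitif; nlia.
Qed.

Section Cut.
Variable J : nat.
Hypothesis hJ : 1 < J < n.-1.
Hypothesis cutJ : forall c, c \in inner_letters q -> (q' false c <= J) = (q' true c <= J).

Lemma cut_below_short : J <= u - K -> j < K -> False.
Proof.
move=> hJu hjK; move/inner_cutP: cutK => cK; have := bottom_x => hj.
have [w Hw] := pair_onto true Hq (k := j.+1) ltac:(nlia).
have wI : w \in inner_letters q by rewrite (inner_lettersE true) // Hw; nlia.
have := cK w wI; have := cutJ wI; rewrite Hq'0 Hq'1 Hw.
have := inner_lettersE false w Hq Hs; rewrite wI.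
by rewrite /swap_blocks; splitif; nlia.
Qed.

(* The cut [J] of [q'] would come from the cut [J + K - 1] of [q], above [K]. *)
Lemma cut_below_full : J <= u - K -> j = K -> False.
Proof.
move=> hJu hjK; move/inner_cutP: cutK => cK.
have /negP := maxK (J := J + K - 1) ltac:(nlia); apply; apply/inner_cutP => c cI.
have := cK c cI; have := cutJ cI; rewrite Hq'0 Hq'1 hjK.
have := inner_lettersE false c Hq Hs; have := inner_lettersE true c Hq Hs; rewrite cI.
by rewrite /swap_blocks; splitif; nlia.
Qed.

Lemma cut_middle : u - K < J < u -> False.
Proof.
move=> hJu; move/inner_cutP: cutK => cK.
have [v Hv] := pair_onto false Hq (k := u.+1) ltac:(nlia).
have vI : v \in inner_letters q by rewrite (inner_lettersE false) // Hv; nlia.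
have := cK v vI; have := cutJ vI; have := cutJ inner_d; rewrite !Hq'0 !Hq'1 Hv Hd.
have := inner_lettersE true v Hq Hs; rewrite vI; have := bottom_x.
by rewrite /swap_blocks; splitif; nlia.
Qed.

Lemma cut_above : u <= J -> False.
Proof.
move=> hJu; have := cutJ inner_x; rewrite Hq'0 Hq'1; have := bottom_x.
by rewrite /swap_blocks; splitif; nlia.
Qed.

Lemma swap_no_cut : False.
Proof.
case: (leqP J (u - K)) => hJ1; last case: (ltnP J u) => hJ2.
- have := bottom_x; case: (ltnP j K) => hjK hj.
    exact: cut_below_short.
  by apply: cut_below_full; nlia.
- by apply: cut_middle; nlia.
- exact: cut_above.
Qed.

End Cut.

Lemma swap_good : good q'.
Proof.
apply: good_of_no_inner_cut => //; [nlia | exact: swap_standard | move=> J hJ].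
apply/negP => /inner_cutP cutJ; apply: (swap_no_cut hJ) => c cI.
exact/cutJ/inner_swap.
Qed.

End SwappedPair.

Lemma standard_rauzy_class_good q : 1 < n -> is_pair q -> standard q ->
  ~ degenerate_star q -> ~ good q -> exists q', in_rauzy_class q q' /\ good q'.
Proof.
move=> hn Hq Hs nd ng.
pose P K := (1 < K < n.-1) && inner_cut q K.
have exP : exists K, P K.
  apply: NNPP => nP; apply: ng; apply: good_of_no_inner_cut => // K hK.
  by apply/negP => cK; apply: nP; exists K; rewrite /P hK.
have ubP K : P K -> K <= n by case/andP => hK _; nlia.
have [K /andP [hK cutK] maxK] := ex_maxnP exP ubP.
have [x Hx] := pair_onto false Hq (k := K) ltac:(nlia).
rewrite -Hx in hK cutK.
have maxKx J : q false x < J < n.-1 -> ~~ inner_cut q J.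
  move=> hJ; apply/negP => cJ; have := maxK J.
  by rewrite /P cJ andbT => /(_ ltac:(nlia)); nlia.
have [d Hd] := pair_onto true Hq (k := n.-1) ltac:(nlia).
have hu : q false x < q false d < n.-1.
  have dI : d \in inner_letters q by rewrite (inner_lettersE true) // Hd; nlia.
  have nd' : q false d != n.-1 by apply/eqP => hdn; apply: nd; split=> //; exists d.
  move/inner_cutP: cutK => /(_ d dI); rewrite Hd.
  by have := inner_lettersE false d Hq Hs; rewrite dI; nlia.
have hj := inner_cut_bottom (x := x) Hq Hs ltac:(nlia) cutK.
have [[a [Ha1 Ha2]] [b [Hb1 Hb2]]] := Hs.
have [q' [Rqq' Hq'0 Hq'1]] :=
  rauzy_class_swap_blocks (x := x) (d := d) Hq Ha1 Ha2 Hb2 Hb1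
    ltac:(nlia) ltac:(nlia) ltac:(nlia) Hd.
exists q'; split=> //.
apply: (swap_good Hq Hs _ _ Hd cutK maxKx (rauzy_class_pair Rqq' Hq) Hq'0 Hq'1); nlia.
Qed.

End RauzyClasses.

Theorem proposition6p3 (A : finType) (hA : 4 <= #|A|) (p : pairT A) :
  is_pair p -> irreducible p ->
  exists q, in_rauzy_class p q /\ (good q \/ degenerate_star q).
Proof.
move=> Hp Hi.
have hn : 1 < #|A| by apply: leq_trans hA.
have [q [Hpq Hs]] := rauzy_class_standard hn Hp Hi.
have Hq := rauzy_class_pair Hpq Hp.
case: (classic (good q \/ degenerate_star q)) => [Hgd | /not_or_and [ng nd]].
  by exists q.
have [q' [Hqq' Hg]] := standard_rauzy_class_good hn Hq Hs nd ng.
by exists q'; split; [exact: rt_trans _ _ _ _ _ Hpq Hqq' | left].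
Qed.
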